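(* Let $\Gamma\Rightarrow F$ be a binary tautological $\to$-sequent, and let $\Delta$ be the result of deleting from $\Gamma$ all irrelevant formulas of $\Gamma\Rightarrow F$. Then the sequent $\Delta\Rightarrow F$ is also tautological (and binary).
   Context: $\to$-formulas are built from propositional atoms with binary $\to$; a $\to$-sequent is $\Gamma\Rightarrow F$ with $\Gamma$ a finite multiset of $\to$-formulas and $F$ a $\to$-formula. A sequent $E_1,\dots,E_n\Rightarrow F$ is identified with the classical formula $E_1\wedge\dots\wedge E_n\to F$ for the purposes of being true (under a truth assignment), tautological, or binary; binary means no atom occurs more than twice. The head of a $\to$-formula is defined by: an atom is its own head; the head of $E\to F$ is the head of $F$. For a binary sequent $\Gamma\Rightarrow F$, the relevant formulas are the elements of the smallest set $S$ such that (1) every formula of $\Gamma$ whose head occurs in $F$ is in $S$, and (2) every formula of $\Gamma$ whose head occurs in some element of $S$ is in $S$. Formulas of $\Gamma$ that are not relevant are irrelevant. *)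

From Stdlib Require Import List Arith Bool ClassicalEpsilon.
Import ListNotations.

Inductive form : Type :=
| Atom : nat -> form
| Imp : form -> form -> form.

Fixpoint eval (v : nat -> bool) (A : form) : bool :=
  match A with
  | Atom p => v p
  | Imp A B => implb (eval v A) (eval v B)
  end.

(* a sequent: antecedent multiset (as a list) and succedent *)
Definition seq_true (v : nat -> bool) (G : list form) (F : form) : Prop :=
  (forall E, In E G -> eval v E = true) -> eval v F = true.

Definition tautological (G : list form) (F : form) : Prop :=
  forall v, seq_true v G F.

Fixpoint atoms (A : form) : list nat :=
  match A with
  | Atom p => [p]
  | Imp A B => atoms A ++ atoms B
  end.

Definition seq_atoms (G : list form) (F : form) : list nat :=
  flat_map atoms G ++ atoms F.

Definition binary (G : list form) (F : form) : Prop :=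
  forall p, count_occ Nat.eq_dec (seq_atoms G F) p <= 2.

Fixpoint head (A : form) : nat :=
  match A with
  | Atom p => p
  | Imp _ B => head B
  end.

Definition occurs (p : nat) (A : form) : Prop := In p (atoms A).

Inductive relevant (G : list form) (F : form) : form -> Prop :=
| rel_base : forall E, In E G -> occurs (head E) F -> relevant G F E
| rel_step : forall E E', In E G -> relevant G F E' -> occurs (head E) E' ->
    relevant G F E.

Definition relevantb (G : list form) (F : form) (E : form) : bool :=
  if excluded_middle_informative (relevant G F E) then true else false.

Definition delete_irrelevant (G : list form) (F : form) : list form :=
  filter (relevantb G F) G.

From Pilot Require Import Defs.
From Stdlib Require Import List Arith ClassicalEpsilon Lia.
Import ListNotations.

(* Deleting formulas whose head is "fresh" preserves tautologicity:
   if the head of every deleted formula occurs nowhere in the remaining sequent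
   Δ ⇒ F, then any assignment falsifying Δ ⇒ F can be modified to make every
   atom outside Δ ⇒ F true.  This does not change the truth value of Δ and F,
   but it makes every deleted formula true (a formula is true as soon as its
   head is), so the modified assignment falsifies Γ ⇒ F as well.
   The irrelevant formulas of Γ ⇒ F are exactly of this kind: by the closure
   rules defining relevance, a formula whose head occurs in F or in a relevant
   formula is itself relevant.  Binarity of Δ ⇒ F is immediate, since deleting
   formulas can only decrease the number of occurrences of each atom; the
   tautology part of the argument does not use binarity at all. *)

Lemma eval_agree (v v' : nat -> bool) (A : form) :
  (forall p, In p (atoms A) -> v' p = v p) -> eval v' A = eval v A.
Proof.
  induction A as [p | A IHA B IHB]; simpl; intros Hag.
  - apply Hag; left; reflexivity.
  - rewrite IHA, IHB; auto; intros p Hp; apply Hag, in_or_app; auto.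
Qed.

Lemma eval_head_true (v : nat -> bool) (A : form) :
  v (Defs.head A) = true -> eval v A = true.
Proof.
  induction A as [p | A _ B IHB]; simpl; intros Hhead; auto.
  rewrite IHB by exact Hhead; destruct (eval v A); reflexivity.
Qed.

Lemma tautological_drop_fresh_heads (G D : list form) (F : form) :
  (forall E, In E G -> In E D \/ ~ In (Defs.head E) (seq_atoms D F)) ->
  tautological G F -> tautological D F.
Proof.
  intros HGD Htaut v HD.
  set (S := seq_atoms D F).
  set (v' := fun p => if in_dec Nat.eq_dec p S then v p else true).
  assert (Hcoinc : forall A, (forall p, In p (atoms A) -> In p S) ->
                             eval v' A = eval v A).
  { intros A HA; apply eval_agree; intros p Hp; unfold v'.
    destruct (in_dec Nat.eq_dec p S); [reflexivity | exfalso; auto]. }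
  rewrite <- Hcoinc by (intros p Hp; apply in_or_app; right; exact Hp).
  apply Htaut; intros E HE.
  destruct (HGD E HE) as [HED | Hfresh].
  - rewrite Hcoinc by (intros p Hp; apply in_or_app; left;
                       apply in_flat_map; eauto).
    apply HD; exact HED.
  - apply eval_head_true; unfold v'.
    destruct (in_dec Nat.eq_dec (Defs.head E) S); [contradiction | reflexivity].
Qed.

Lemma relevantb_spec (G : list form) (F E : form) :
  relevantb G F E = true <-> relevant G F E.
Proof.
  unfold relevantb; destruct (excluded_middle_informative _); split;
    congruence || tauto.
Qed.

Lemma in_delete_irrelevant (G : list form) (F E : form) :
  In E (delete_irrelevant G F) <-> In E G /\ relevant G F E.
Proof.
  unfold delete_irrelevant; rewrite filter_In, relevantb_spec; tauto.
Qed.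

(* The head of an irrelevant formula occurs neither in F nor in any relevant
   formula: otherwise one of the two closure rules would make it relevant. *)
Lemma irrelevant_head_fresh (G : list form) (F E : form) :
  In E G -> ~ relevant G F E ->
  ~ In (Defs.head E) (seq_atoms (delete_irrelevant G F) F).
Proof.
  intros HE Hirr Hocc; apply Hirr.
  apply in_app_or in Hocc as [HinD | HinF].
  - apply in_flat_map in HinD as [E' [HE' Hhead]].
    apply in_delete_irrelevant in HE' as [_ Hrel'].
    exact (rel_step G F E E' HE Hrel' Hhead).
  - exact (rel_base G F E HE HinF).
Qed.

Lemma count_atoms_filter (f : form -> bool) (G : list form) (p : nat) :
  count_occ Nat.eq_dec (flat_map atoms (filter f G)) p <=
  count_occ Nat.eq_dec (flat_map atoms G) p.
Proof.
  induction G as [| A G IH]; simpl; auto.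
  destruct (f A); simpl; rewrite !count_occ_app; lia.
Qed.

Lemma binary_filter (f : form -> bool) (G : list form) (F : form) :
  binary G F -> binary (filter f G) F.
Proof.
  intros Hbin p; specialize (Hbin p); unfold seq_atoms in *.
  rewrite count_occ_app in *.
  pose proof (count_atoms_filter f G p); lia.
Qed.

Theorem lemma4p1 (G : list form) (F : form) :
  binary G F -> tautological G F ->
  tautological (delete_irrelevant G F) F /\ binary (delete_irrelevant G F) F.
Proof.
  intros Hbin Htaut; split.
  - apply (tautological_drop_fresh_heads G); [| exact Htaut].
    intros E HE.
    destruct (excluded_middle_informative (relevant G F E)) as [Hrel | Hirr].
    + left; apply in_delete_irrelevant; auto.
    + right; apply irrelevant_head_fresh; assumption.
  - apply binary_filter; exact Hbin.
Qed.
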